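(* There exist functions $g,h:[0,1]\to\mathbb{R}$, each having a $1$-monotone graph, such that the graph of $g+h$ is not $\sigma$-monotone.
   Context: A metric space $(X,d)$ is $c$-monotone if there is a linear order $<$ on $X$ with $d(x,y)\le c\,d(x,z)$ whenever $x<y<z$; monotone if $c$-monotone for some $c>0$; $\sigma$-monotone if a countable union of monotone subspaces. Graphs are subsets of $\mathbb{R}^2$ with the Euclidean metric. *)

From Stdlib Require Import Reals.
Open Scope R_scope.

Definition pt := (R * R)%type.

Definition edist (p q : pt) : R :=
  sqrt ((fst p - fst q)^2 + (snd p - snd q)^2).

Definition pset := pt -> Prop.

Definition strict_linear_order_on (A : pset) (lt : pt -> pt -> Prop) : Prop :=
  (forall x, A x -> ~ lt x x) /\
  (forall x y z, A x -> A y -> A z -> lt x y -> lt y z -> lt x z) /\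
  (forall x y, A x -> A y -> x <> y -> lt x y \/ lt y x).

Definition c_monotone (c : R) (A : pset) : Prop :=
  exists lt : pt -> pt -> Prop,
    strict_linear_order_on A lt /\
    forall x y z, A x -> A y -> A z -> lt x y -> lt y z ->
      edist x y <= c * edist x z.

Definition monotone (A : pset) : Prop :=
  exists c, 0 < c /\ c_monotone c A.

Definition sigma_monotone (A : pset) : Prop :=
  exists B : nat -> pset,
    (forall n, monotone (B n)) /\
    (forall n p, B n p -> A p) /\
    (forall p, A p -> exists n, B n p).

Definition graph01 (f : R -> R) : pset :=
  fun p => 0 <= fst p <= 1 /\ snd p = f (fst p).

(* The sum is a lacunary series of layers.  The layer of level [L] is a step function
   that, inside every cell of the level-[L] grid, runs through the vertices of a regular
   polygon of radius [amp L] with [12 (L + 1)] vertices; the deeper layers are too small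
   to spoil this picture.  Splitting every layer into its cumulative rises and falls
   writes the sum as [g + h] with [g] nondecreasing and [h] nonincreasing, and graphs of
   monotone functions are 1-monotone.

   A c-monotone set, on the other hand, cannot contain points near all vertices of a
   regular polygon with many vertices: its order must climb from the least to the
   greatest of these points along both arcs of the polygon, so the midpoint of the
   longer arc lies between two consecutive points of the shorter one and is therefore
   close to one of them, whereas it is far from all of them.  Hence every cell has a
   subcell missing a given monotone set, and a nested-interval argument yields a point
   of the graph outside any countable family of monotone sets. *)

From Stdlib Require Import Reals Lra Lia Classical ClassicalEpsilon ZArith.
From Coquelicot Require Import Coquelicot.
Open Scope R_scope.

Lemma edist_sym p q : edist p q = edist q p.
Proof. unfold edist. f_equal. ring. Qed.

Lemma edist_nonneg p q : 0 <= edist p q.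
Proof. apply sqrt_pos. Qed.

Lemma edist_refl p : edist p p = 0.
Proof.
  unfold edist. replace ((fst p - fst p)^2 + (snd p - snd p)^2) with 0 by ring.
  apply sqrt_0.
Qed.

Lemma edist_le_abs_sum p q :
  edist p q <= Rabs (fst p - fst q) + Rabs (snd p - snd q).
Proof.
  unfold edist. set (a := fst p - fst q). set (b := snd p - snd q).
  pose proof (Rabs_pos a); pose proof (Rabs_pos b).
  rewrite <- (sqrt_Rsqr (Rabs a + Rabs b)) by lra.
  apply sqrt_le_1_alt. unfold Rsqr.
  rewrite <- (pow2_abs a), <- (pow2_abs b). nra.
Qed.

Lemma sqrt_sum_squares_triangle a b c d :
  sqrt ((a + c)^2 + (b + d)^2) <= sqrt (a^2 + b^2) + sqrt (c^2 + d^2).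
Proof.
  assert (HX : 0 <= a^2 + b^2) by nra. assert (HY : 0 <= c^2 + d^2) by nra.
  pose proof (sqrt_pos (a^2 + b^2)). pose proof (sqrt_pos (c^2 + d^2)).
  rewrite <- (sqrt_Rsqr (sqrt (a^2 + b^2) + sqrt (c^2 + d^2))) by lra.
  apply sqrt_le_1_alt. unfold Rsqr.
  pose proof (sqrt_sqrt _ HX). pose proof (sqrt_sqrt _ HY).
  assert (cauchy_schwarz : a * c + b * d <= sqrt (a^2 + b^2) * sqrt (c^2 + d^2)).
  { rewrite <- sqrt_mult by lra.
    destruct (Rle_or_lt (a * c + b * d) 0).
    { pose proof (sqrt_pos ((a^2 + b^2) * (c^2 + d^2))); lra. }
    rewrite <- (sqrt_Rsqr (a * c + b * d)) by lra.
    apply sqrt_le_1_alt. unfold Rsqr. pose proof (pow2_ge_0 (a * d - b * c)). nra. }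
  nra.
Qed.

Lemma edist_triangle p q r : edist p r <= edist p q + edist q r.
Proof.
  unfold edist.
  replace (fst p - fst r) with ((fst p - fst q) + (fst q - fst r)) by ring.
  replace (snd p - snd r) with ((snd p - snd q) + (snd q - snd r)) by ring.
  apply sqrt_sum_squares_triangle.
Qed.

Lemma monotone_graph01_1_monotone (g : R -> R) :
  (forall a b, 0 <= a -> a <= b -> b <= 1 -> g a <= g b) \/
  (forall a b, 0 <= a -> a <= b -> b <= 1 -> g b <= g a) ->
  c_monotone 1 (graph01 g).
Proof.
  intros Hg. exists (fun p q => fst p < fst q). split; [split; [|split]|].
  - intros x _ H; lra.
  - intros x y z _ _ _ H1 H2; lra.
  - intros [x1 x2] [y1 y2] [_ Hx] [_ Hy] Hne; simpl in *.
    destruct (Rtotal_order x1 y1) as [H|[H|H]]; auto.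
    subst. exfalso; apply Hne; reflexivity.
  - intros [x1 x2] [y1 y2] [z1 z2] [[Hx0 Hx1] Hx] [[Hy0 Hy1] Hy] [[Hz0 Hz1] Hz] H1 H2;
      simpl in *. subst. rewrite Rmult_1_l. unfold edist; simpl.
    apply sqrt_le_1_alt.
    assert ((g y1 - g x1)^2 <= (g z1 - g x1)^2).
    { destruct Hg as [Hg|Hg];
        pose proof (Hg x1 y1 Hx0 (Rlt_le _ _ H1) Hy1);
        pose proof (Hg y1 z1 Hy0 (Rlt_le _ _ H2) Hz1); nra. }
    nra.
Qed.

(** * Closed chains in monotone sets *)

Definition le_of (lt : pt -> pt -> Prop) a b := lt a b \/ a = b.

Section MonotoneChains.
Variable A : pset.
Variable lt : pt -> pt -> Prop.
Hypothesis lt_order : strict_linear_order_on A lt.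

Lemma le_of_total x y : A x -> A y -> le_of lt x y \/ lt y x.
Proof.
  intros Hx Hy. destruct lt_order as (_ & _ & Htot).
  destruct (classic (x = y)) as [->|Hne]; [left; right; reflexivity|].
  destruct (Htot x y Hx Hy Hne); [left; left | right]; auto.
Qed.

Lemma chain_crosses (s : nat -> pt) (y : pt) : (forall i, A (s i)) -> A y ->
  forall n, le_of lt (s 0%nat) y -> le_of lt y (s n) ->
  (exists i, (i <= n)%nat /\ y = s i) \/
  (exists i, (i < n)%nat /\ lt (s i) y /\ lt y (s (S i))).
Proof.
  intros Hs Hy. destruct lt_order as (Hirr & _ & _).
  induction n as [|n IH]; intros H0 H1.
  - left. exists 0%nat. split; [lia|].
    destruct H0 as [H0|H0], H1 as [H1|H1]; auto.
    exfalso; apply (Hirr (s 0%nat) (Hs 0%nat)). destruct lt_order as (_ & Htr & _); eauto.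
  - destruct (le_of_total y (s n) Hy (Hs n)) as [Hle|Hlt].
    + destruct (IH H0 Hle) as [(i & Hi & E)|(i & Hi & E)].
      * left; exists i; split; [lia|auto].
      * right; exists i; split; [lia|auto].
    + destruct H1 as [H1|H1].
      * right; exists n; split; [lia|auto].
      * left; exists (S n); split; [lia|auto].
Qed.

Lemma chain_has_min (q : nat -> pt) : (forall i, A (q i)) -> forall n,
  exists a, (a <= n)%nat /\ forall i, (i <= n)%nat -> le_of lt (q a) (q i).
Proof.
  intros Hq. destruct lt_order as (_ & Htr & _).
  induction n as [|n (a & Ha & IH)].
  - exists 0%nat; split; [lia|]. intros i Hi; replace i with 0%nat by lia; right; auto.
  - destruct (le_of_total (q a) (q (S n)) (Hq _) (Hq _)) as [Hle|Hlt].
    + exists a; split; [lia|]. intros i Hi.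
      destruct (Nat.eq_dec i (S n)) as [->|]; auto. apply IH; lia.
    + exists (S n); split; [lia|]. intros i Hi.
      destruct (Nat.eq_dec i (S n)) as [->|]; [right; auto|].
      destruct (IH i ltac:(lia)) as [H|H]; left; [eauto | rewrite <- H; auto].
Qed.

Lemma chain_has_max (q : nat -> pt) : (forall i, A (q i)) -> forall n,
  exists b, (b <= n)%nat /\ forall i, (i <= n)%nat -> le_of lt (q i) (q b).
Proof.
  intros Hq. destruct lt_order as (_ & Htr & _).
  induction n as [|n (b & Hb & IH)].
  - exists 0%nat; split; [lia|]. intros i Hi; replace i with 0%nat by lia; right; auto.
  - destruct (le_of_total (q (S n)) (q b) (Hq _) (Hq _)) as [Hle|Hlt].
    + exists b; split; [lia|]. intros i Hi.
      destruct (Nat.eq_dec i (S n)) as [->|]; auto. apply IH; lia.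
    + exists (S n); split; [lia|]. intros i Hi.
      destruct (Nat.eq_dec i (S n)) as [->|]; [right; auto|].
      destruct (IH i ltac:(lia)) as [H|H]; left; [eauto | rewrite H; auto].
Qed.

Variable c : R.
Hypothesis c_ge0 : 0 <= c.
Hypothesis lt_c_monotone : forall x y z, A x -> A y -> A z ->
  lt x y -> lt y z -> edist x y <= c * edist x z.

Lemma chain_close (s : nat -> pt) (y : pt) (d : R) n :
  (forall i, A (s i)) -> A y -> (forall i, edist (s i) (s (S i)) <= d) ->
  le_of lt (s 0%nat) y -> le_of lt y (s n) ->
  exists i, (i <= n)%nat /\ edist (s i) y <= c * d.
Proof.
  intros Hs Hy Hd H0 H1.
  assert (0 <= d) by (pose proof (Hd 0%nat); pose proof (edist_nonneg (s 0%nat) (s 1%nat)); lra).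
  destruct (chain_crosses s y Hs Hy n H0 H1) as [(i & Hi & E)|(i & Hi & E1 & E2)].
  - exists i; split; auto. subst y; rewrite edist_refl. nra.
  - exists i; split; [lia|].
    eapply Rle_trans; [apply (lt_c_monotone _ _ _ (Hs i) Hy (Hs (S i)) E1 E2)|].
    apply Rmult_le_compat_l; auto.
Qed.

(* Between the least and the greatest point of a closed chain run two arcs; every
   point of the longer one is close to some point of the shorter one, yet its
   midpoint is far from all of them. *)
Lemma c_monotone_no_closed_chain (m : nat) (q : nat -> pt) (d : R) :
  (6 <= m)%nat -> (forall i, A (q i)) -> (forall i, q (i + m)%nat = q i) ->
  (forall i, edist (q i) (q (S i)) <= d) ->
  (forall i j, (j <= i)%nat -> (m <= 6 * (i - j))%nat -> (6 * (i - j) <= 5 * m)%nat ->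
     c * d < edist (q i) (q j)) ->
  False.
Proof.
  intros Hm Hq Hper Hd Hfar.
  assert (Hmod : forall i, q i = q (i mod m)).
  { intros i. rewrite (Nat.div_mod i m) at 1 by lia.
    generalize (i / m)%nat. intros k. induction k as [|k IH].
    - f_equal; lia.
    - replace (m * S k + i mod m)%nat with ((m * k + i mod m) + m)%nat by lia.
      rewrite Hper; auto. }
  destruct (chain_has_min q Hq (m - 1)) as (a & Ha & Hmin).
  destruct (chain_has_max q Hq (m - 1)) as (b & Hb & Hmax).
  assert (Hmin' : forall i, le_of lt (q a) (q i)).
  { intros i; rewrite (Hmod i). apply Hmin. pose proof (Nat.mod_upper_bound i m); lia. }
  assert (Hmax' : forall i, le_of lt (q i) (q b)).
  { intros i; rewrite (Hmod i). apply Hmax. pose proof (Nat.mod_upper_bound i m); lia. }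
  set (b' := if Nat.ltb b a then (b + m)%nat else b).
  assert (Hb'1 : q b' = q b) by (unfold b'; destruct (Nat.ltb b a); auto).
  assert (Hb'2 : (a <= b' < a + m)%nat) by (unfold b'; destruct (Nat.ltb_spec b a); lia).
  set (D := (b' - a)%nat).
  destruct (Compare_dec.le_lt_dec m (2 * D)) as [HD|HD].
  - set (y := (a + D / 2)%nat).
    assert (Hy : (2 * (D / 2) <= D <= 2 * (D / 2) + 1)%nat)
      by (pose proof (Nat.div_mod D 2); pose proof (Nat.mod_upper_bound D 2); lia).
    destruct (chain_close (fun t => q (a + m - t)%nat) (q y) d (a + m - b')
                (fun _ => Hq _) (Hq _)) as (t & Ht & Hclose).
    + intros i. destruct (Compare_dec.le_lt_dec (a + m) i).
      * replace (a + m - i)%nat with 0%nat by lia. replace (a + m - S i)%nat with 0%nat by lia.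
        rewrite edist_refl.
        pose proof (Hd 0%nat); pose proof (edist_nonneg (q 0%nat) (q 1%nat)); lra.
      * rewrite edist_sym. replace (a + m - i)%nat with (S (a + m - S i)) by lia. apply Hd.
    + simpl. replace (a + m - 0)%nat with (a + m)%nat by lia. rewrite Hper. apply Hmin'.
    + simpl. replace (a + m - (a + m - b'))%nat with b' by lia. rewrite Hb'1. apply Hmax'.
    + simpl in Hclose.
      assert (c * d < edist (q (a + m - t)%nat) (q y)) by (apply Hfar; unfold y, D in *; lia).
      lra.
  - set (E := (a + m - b')%nat).
    set (y := (b' + E / 2)%nat).
    assert (Hy : (2 * (E / 2) <= E <= 2 * (E / 2) + 1)%nat)
      by (pose proof (Nat.div_mod E 2); pose proof (Nat.mod_upper_bound E 2); lia).
    destruct (chain_close (fun t => q (a + t)%nat) (q y) d D (fun _ => Hq _) (Hq _))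
      as (t & Ht & Hclose).
    + intros i. replace (a + S i)%nat with (S (a + i)) by lia. apply Hd.
    + simpl. replace (a + 0)%nat with a by lia. apply Hmin'.
    + simpl. replace (a + D)%nat with b' by (unfold D; lia). rewrite Hb'1. apply Hmax'.
    + simpl in Hclose. rewrite edist_sym in Hclose.
      assert (c * d < edist (q y) (q (a + t)%nat)) by (apply Hfar; unfold y, E, D in *; lia).
      lra.
Qed.

End MonotoneChains.

(** * Regular polygons *)

Definition angle (m i : nat) : R := 2 * PI * INR i / INR m.

Definition polygon_vertex (x0 y0 r : R) (m i : nat) : pt :=
  (x0 + r * (1 + cos (angle m i)), y0 + r * sin (angle m i)).

Lemma INR_pos_of_ge1 (m : nat) : (1 <= m)%nat -> 0 < INR m.
Proof. intros; apply lt_0_INR; lia. Qed.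

Lemma polygon_vertex_dist x0 y0 r m i j : 0 <= r ->
  edist (polygon_vertex x0 y0 r m i) (polygon_vertex x0 y0 r m j) =
  2 * r * Rabs (sin ((angle m i - angle m j) / 2)).
Proof.
  intros Hr. unfold edist, polygon_vertex; cbn [fst snd].
  replace (x0 + r * (1 + cos (angle m i)) - (x0 + r * (1 + cos (angle m j))))
    with (r * (cos (angle m i) - cos (angle m j))) by ring.
  replace (y0 + r * sin (angle m i) - (y0 + r * sin (angle m j)))
    with (r * (sin (angle m i) - sin (angle m j))) by ring.
  rewrite form2, form4.
  set (u := sin ((angle m i - angle m j) / 2)).
  set (v := sin ((angle m i + angle m j) / 2)).
  set (w := cos ((angle m i + angle m j) / 2)).
  assert (Hvw : v^2 + w^2 = 1).
  { unfold v, w. rewrite <- (sin2_cos2 ((angle m i + angle m j) / 2)). unfold Rsqr; ring. }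
  replace ((r * (-2 * u * v))^2 + (r * (2 * w * u))^2) with ((2 * r * Rabs u)^2).
  - rewrite sqrt_pow2; auto. pose proof (Rabs_pos u); nra.
  - rewrite Rpow_mult_distr, pow2_abs.
    replace ((r * (-2 * u * v))^2 + (r * (2 * w * u))^2) with (4 * r^2 * u^2 * (v^2 + w^2)) by ring.
    rewrite Hvw; ring.
Qed.

Lemma Rabs_sin_le u : Rabs (sin u) <= Rabs u.
Proof.
  assert (Hpos : forall v, 0 < v -> Rabs (sin v) <= v).
  { intros v Hv. pose proof (sin_lt_x v Hv). pose proof (SIN_bound v).
    destruct (Rle_lt_dec 1 v).
    - unfold Rabs; destruct Rcase_abs; lra.
    - assert (0 <= sin v) by (apply sin_ge_0; pose proof PI2_1; lra).
      rewrite Rabs_pos_eq; lra. }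
  destruct (Rtotal_order u 0) as [H|[H|H]].
  - replace (sin u) with (- sin (- u)) by (rewrite sin_neg; ring).
    rewrite Rabs_Ropp, (Rabs_left u H). apply Hpos; lra.
  - subst; rewrite sin_0, Rabs_R0; lra.
  - rewrite (Rabs_pos_eq u) by lra. apply Hpos; lra.
Qed.

Lemma sin_ge_half u : PI / 6 <= u <= 5 * PI / 6 -> 1 / 2 <= sin u.
Proof.
  intros Hu. rewrite <- cos_shift, <- cos_PI3. pose proof PI_RGT_0.
  destruct (Rle_lt_dec 0 (PI / 2 - u)).
  - apply cos_decr_1; lra.
  - rewrite (cos_sym (PI / 2 - u)). apply cos_decr_1; lra.
Qed.

Lemma polygon_vertex_step x0 y0 r m i : 0 <= r -> (1 <= m)%nat ->
  edist (polygon_vertex x0 y0 r m i) (polygon_vertex x0 y0 r m (S i)) <= r * (2 * PI / INR m).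
Proof.
  intros Hr Hm. rewrite polygon_vertex_dist by auto.
  pose proof (INR_pos_of_ge1 m Hm). pose proof PI_RGT_0.
  replace ((angle m i - angle m (S i)) / 2) with (- (PI / INR m))
    by (unfold angle; rewrite S_INR; field; lra).
  rewrite sin_neg, Rabs_Ropp.
  pose proof (Rabs_sin_le (PI / INR m)) as Hs.
  rewrite (Rabs_pos_eq (PI / INR m)) in Hs by (apply Rlt_le, Rdiv_lt_0_compat; lra).
  replace (r * (2 * PI / INR m)) with (2 * r * (PI / INR m)) by (field; lra).
  apply Rmult_le_compat_l; lra.
Qed.

Lemma polygon_vertex_far x0 y0 r m i j : 0 <= r -> (1 <= m)%nat -> (j <= i)%nat ->
  (m <= 6 * (i - j))%nat -> (6 * (i - j) <= 5 * m)%nat ->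
  r <= edist (polygon_vertex x0 y0 r m i) (polygon_vertex x0 y0 r m j).
Proof.
  intros Hr Hm Hji H1 H2. rewrite polygon_vertex_dist by auto.
  pose proof (INR_pos_of_ge1 m Hm). pose proof PI_RGT_0.
  replace ((angle m i - angle m j) / 2) with (PI * INR (i - j) / INR m)
    by (unfold angle; rewrite minus_INR by auto; field; lra).
  apply le_INR in H1. apply le_INR in H2. rewrite mult_INR in H1. rewrite !mult_INR in H2.
  replace (INR 6) with 6 in * by (simpl; ring). replace (INR 5) with 5 in * by (simpl; ring).
  set (k := INR (i - j)) in *. set (mm := INR m) in *.
  assert (Hs : 1 / 2 <= sin (PI * k / mm)).
  { apply sin_ge_half. split.
    - apply (Rmult_le_reg_r (6 * mm)); [lra|].
      replace (PI / 6 * (6 * mm)) with (PI * mm) by field.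
      replace (PI * k / mm * (6 * mm)) with (PI * (6 * k)) by (field; lra).
      apply Rmult_le_compat_l; lra.
    - apply (Rmult_le_reg_r (6 * mm)); [lra|].
      replace (5 * PI / 6 * (6 * mm)) with (PI * (5 * mm)) by field.
      replace (PI * k / mm * (6 * mm)) with (PI * (6 * k)) by (field; lra).
      apply Rmult_le_compat_l; lra. }
  rewrite Rabs_pos_eq by lra. nra.
Qed.

Lemma polygon_vertex_mod x0 y0 r m i : (1 <= m)%nat ->
  polygon_vertex x0 y0 r m i = polygon_vertex x0 y0 r m (i mod m).
Proof.
  intros Hm. pose proof (INR_pos_of_ge1 m Hm).
  rewrite (Nat.div_mod i m) at 1 by lia.
  generalize (i / m)%nat. intros k. induction k as [|k IH].
  - f_equal; lia.
  - rewrite <- IH. unfold polygon_vertex.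
    replace (angle m (m * S k + i mod m)%nat) with (angle m (m * k + i mod m)%nat + 2 * INR 1 * PI)
      by (unfold angle; change (INR 1) with 1; rewrite !plus_INR, !mult_INR, S_INR; field; lra).
    rewrite cos_period, sin_period. reflexivity.
Qed.

Lemma c_monotone_not_near_polygon (A : pset) c m x0 y0 r eps (q : nat -> pt) :
  0 <= c -> c_monotone c A -> (6 <= m)%nat -> 0 <= r ->
  c * (r * (2 * PI / INR m) + 2 * eps) < r - 2 * eps ->
  (forall j, (j < m)%nat -> A (q j) /\ edist (q j) (polygon_vertex x0 y0 r m j) <= eps) ->
  False.
Proof.
  intros Hc (lt & Hlin & Hmon) Hm Hr Hsmall Hq.
  set (p := polygon_vertex x0 y0 r m).
  set (q' := fun i => q (i mod m)).
  assert (Hq' : forall i, A (q' i) /\ edist (q' i) (p i) <= eps).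
  { intros i. unfold q', p. rewrite (polygon_vertex_mod x0 y0 r m i) by lia.
    apply Hq, Nat.mod_upper_bound; lia. }
  apply (c_monotone_no_closed_chain A lt Hlin c Hc Hmon m q' (r * (2 * PI / INR m) + 2 * eps) Hm).
  - intros i. apply Hq'.
  - intros i. unfold q'. replace (i + m)%nat with (i + 1 * m)%nat by lia.
    rewrite Nat.Div0.mod_add. reflexivity.
  - intros i. pose proof (polygon_vertex_step x0 y0 r m i Hr ltac:(lia)) as Hstep.
    pose proof (edist_triangle (q' i) (p i) (q' (S i))).
    pose proof (edist_triangle (p i) (p (S i)) (q' (S i))).
    pose proof (proj2 (Hq' i)). pose proof (proj2 (Hq' (S i))).
    rewrite (edist_sym (p (S i)) (q' (S i))) in *. unfold p in *. lra.
  - intros i j Hji H1 H2.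
    pose proof (polygon_vertex_far x0 y0 r m i j Hr ltac:(lia) Hji H1 H2) as Hfar.
    pose proof (edist_triangle (p i) (q' i) (p j)). pose proof (edist_triangle (q' i) (q' j) (p j)).
    pose proof (proj2 (Hq' i)). pose proof (proj2 (Hq' j)).
    rewrite (edist_sym (p i) (q' i)) in *. unfold p in *. lra.
Qed.

(* Meaningful for [x >= 0] only. *)
Definition nfloor (x : R) : nat := Z.to_nat (up x - 1).

Lemma nfloor_spec x : 0 <= x -> INR (nfloor x) <= x < INR (nfloor x) + 1.
Proof.
  intros Hx. destruct (archimed x) as [H1 H2].
  assert (Hu : (0 < up x)%Z) by (apply lt_IZR; simpl; lra).
  unfold nfloor. rewrite INR_IZR_INZ, Z2Nat.id by lia. rewrite minus_IZR. simpl. lra.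
Qed.

Lemma nfloor_unique x n : 0 <= x -> INR n <= x < INR n + 1 -> nfloor x = n.
Proof.
  intros Hx Hn. pose proof (nfloor_spec x Hx).
  assert (INR (nfloor x) < INR (n + 1)) by (rewrite plus_INR; simpl; lra).
  assert (INR n < INR (nfloor x + 1)) by (rewrite plus_INR; simpl; lra).
  assert (nfloor x < n + 1)%nat by (apply INR_lt; auto).
  assert (n < nfloor x + 1)%nat by (apply INR_lt; auto). lia.
Qed.

Lemma nfloor_INR n : nfloor (INR n) = n.
Proof. apply nfloor_unique; [apply pos_INR | lra]. Qed.

Lemma nfloor_le_mono x y : 0 <= x -> x <= y -> (nfloor x <= nfloor y)%nat.
Proof.
  intros Hx Hxy. pose proof (nfloor_spec x Hx). pose proof (nfloor_spec y ltac:(lra)).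
  assert (INR (nfloor x) < INR (nfloor y + 1)) by (rewrite plus_INR; simpl; lra).
  assert (nfloor x < nfloor y + 1)%nat by (apply INR_lt; auto). lia.
Qed.

Lemma nfloor_div x d : 0 <= x -> (1 <= d)%nat -> nfloor (x / INR d) = (nfloor x / d)%nat.
Proof.
  intros Hx Hd. pose proof (nfloor_spec x Hx).
  assert (Hdr : 0 < INR d) by (apply lt_0_INR; lia).
  pose proof (Nat.div_mod (nfloor x) d ltac:(lia)) as Hdiv.
  pose proof (Nat.mod_upper_bound (nfloor x) d ltac:(lia)).
  set (n := (nfloor x / d)%nat) in *. set (r := (nfloor x mod d)%nat) in *.
  assert (E1 : INR (nfloor x) = INR d * INR n + INR r)
    by (rewrite Hdiv, plus_INR, mult_INR; reflexivity).
  assert (E2 : INR r + 1 <= INR d) by (rewrite <- S_INR; apply le_INR; lia).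
  pose proof (pos_INR r).
  apply nfloor_unique; [apply Rdiv_le_0_compat; lra|].
  split; [apply Rmult_le_reg_r with (INR d) | apply Rmult_lt_reg_r with (INR d)];
    auto; unfold Rdiv; rewrite Rmult_assoc, Rinv_l by lra; nra.
Qed.

(* Level [L] splits each cell of width [1 / ncells L] into [branch L] subcells.  Read
   along these subcells, the level-[L] pattern traces a regular [nvert L]-gon: subcell
   [vertex_slot L j] lies at horizontal offset about [amp L * (1 + cos (angle j))]
   in its parent cell (up to [amp L / nvert L]), and there the pattern is
   [sin (angle j)].  The residue [j + 1] modulo [nvert L + 1] keeps the slots distinct,
   lets [pattern] decode [j], and leaves slot [0] empty.  The amplitude [amp L] is
   [vscale L] subcell widths, which makes these offsets whole slots, and it also equals
   [1 / (ncells L * 2^L * 4 * patlen L)] ([amp_eq]), which bounds the total rise of the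
   layer over [[0, 1]] by [(1/2)^L]. *)
Definition nvert (L : nat) : nat := 12 * (L + 1).
Definition vertex_row (L j : nat) : nat := nfloor (INR (nvert L) * (1 + cos (angle (nvert L) j))).
Definition vertex_slot (L j : nat) : nat := (nvert L + 1) * vertex_row L j + j + 1.
Definition patlen (L : nat) : nat := (nvert L + 1) * (2 * nvert L + 1) + 1.
Definition vscale (L : nat) : nat := (nvert L + 1) * nvert L.
Definition branch (L : nat) : nat := 2 ^ L * 4 * vscale L * patlen L.
Fixpoint ncells (L : nat) : nat := match L with O => 1 | S l => ncells l * branch l end.
Definition amp (L : nat) : R := INR (vscale L) / INR (ncells (S L)).

Definition pattern (L k : nat) : R :=
  let j := ((k - 1) mod (nvert L + 1))%nat in
  if (Nat.leb 1 k && Nat.ltb j (nvert L) && Nat.eqb k (vertex_slot L j))%bool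
  then sin (angle (nvert L) j) else 0.

Definition pattern_mod (L n : nat) : R := pattern L (n mod branch L).

Lemma nvert_ge12 L : (12 <= nvert L)%nat.
Proof. unfold nvert; lia. Qed.

Lemma patlen_lt_branch L : (patlen L + 2 <= branch L)%nat.
Proof.
  unfold branch, vscale. pose proof (nvert_ge12 L).
  pose proof (Nat.pow_le_mono_r 2 0 L ltac:(lia) ltac:(lia)) as Hp. simpl in Hp.
  assert (1 <= patlen L)%nat by (unfold patlen; lia).
  set (p := (2 ^ L)%nat) in *. set (a := ((nvert L + 1) * nvert L)%nat).
  assert (4 <= p * 4 * a)%nat by (unfold a; nia). nia.
Qed.

Lemma branch_pos L : (1 <= branch L)%nat.
Proof. pose proof (patlen_lt_branch L). lia. Qed.

Lemma ncells_pos L : (1 <= ncells L)%nat.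
Proof. induction L; simpl; auto. pose proof (branch_pos L). nia. Qed.

Lemma INR_ncells_pos L : 0 < INR (ncells L).
Proof. apply lt_0_INR. pose proof (ncells_pos L). lia. Qed.

Lemma pattern_bound L k : -1 <= pattern L k <= 1.
Proof. unfold pattern. destruct (_ && _ && _)%bool; [apply SIN_bound | lra]. Qed.

Lemma vertex_row_le L j : (vertex_row L j <= 2 * nvert L)%nat.
Proof.
  unfold vertex_row. set (x := INR (nvert L) * (1 + cos (angle (nvert L) j))).
  assert (0 <= x <= 2 * INR (nvert L))
    by (unfold x; pose proof (COS_bound (angle (nvert L) j)); pose proof (pos_INR (nvert L)); nra).
  pose proof (nfloor_spec x ltac:(lra)).
  assert (INR (nfloor x) < INR (2 * nvert L + 1)) by (rewrite plus_INR, mult_INR; simpl; lra).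
  assert (nfloor x < 2 * nvert L + 1)%nat by (apply INR_lt; auto). lia.
Qed.

Lemma vertex_slot_lt L j : (j < nvert L)%nat -> (vertex_slot L j < patlen L)%nat.
Proof. intros. unfold vertex_slot, patlen. pose proof (vertex_row_le L j). nia. Qed.

Lemma pattern_tail L k : (patlen L <= k)%nat -> pattern L k = 0.
Proof.
  intros Hk. unfold pattern.
  destruct (Nat.leb 1 k && Nat.ltb _ (nvert L) && Nat.eqb k _)%bool eqn:E; auto.
  apply andb_prop in E as [E E3]. apply andb_prop in E as [E1 E2].
  apply Nat.ltb_lt in E2. apply Nat.eqb_eq in E3. pose proof (vertex_slot_lt L _ E2). lia.
Qed.

Lemma pattern_slot L j : (j < nvert L)%nat -> pattern L (vertex_slot L j) = sin (angle (nvert L) j).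
Proof.
  intros Hj. unfold pattern.
  replace ((vertex_slot L j - 1) mod (nvert L + 1))%nat with j.
  2:{ unfold vertex_slot.
      replace ((nvert L + 1) * vertex_row L j + j + 1 - 1)%nat
        with (j + vertex_row L j * (nvert L + 1))%nat by lia.
      rewrite Nat.Div0.mod_add, Nat.mod_small; lia. }
  replace (Nat.leb 1 (vertex_slot L j)) with true
    by (symmetry; apply Nat.leb_le; unfold vertex_slot; lia).
  replace (Nat.ltb j (nvert L)) with true by (symmetry; apply Nat.ltb_lt; auto).
  rewrite Nat.eqb_refl. reflexivity.
Qed.

Lemma amp_eq L : amp L = / (INR (ncells L) * 2 ^ L * 4 * INR (patlen L)).
Proof.
  unfold amp. simpl ncells. unfold branch. rewrite !mult_INR, pow_INR.
  pose proof (INR_ncells_pos L).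
  assert (0 < INR (vscale L)) by (apply lt_0_INR; unfold vscale; pose proof (nvert_ge12 L); nia).
  assert (0 < INR (patlen L)) by (apply lt_0_INR; unfold patlen; lia).
  assert (0 < 2 ^ L) by (apply pow_lt; lra).
  replace (INR 2) with 2 by reflexivity. replace (INR 4) with 4 by (simpl; ring).
  field. repeat split; lra.
Qed.

Lemma amp_pos L : 0 < amp L.
Proof.
  rewrite amp_eq. pose proof (INR_ncells_pos L). pose proof (pow_lt 2 L ltac:(lra)).
  assert (0 < INR (patlen L)) by (apply lt_0_INR; unfold patlen; lia).
  apply Rinv_0_lt_compat. repeat apply Rmult_lt_0_compat; lra.
Qed.

Lemma amp_le_pow L : amp L <= (1 / 2) ^ L.
Proof.
  rewrite amp_eq, Rdiv_1_l, pow_inv. pose proof (pow_lt 2 L ltac:(lra)).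
  assert (1 <= INR (ncells L)) by (apply (le_INR 1), ncells_pos).
  assert (1 <= INR (patlen L)) by (apply (le_INR 1); unfold patlen; lia).
  apply Rinv_le_contravar; [lra|].
  replace (INR (ncells L) * 2 ^ L * 4 * INR (patlen L))
    with (2 ^ L * (4 * (INR (ncells L) * INR (patlen L)))) by ring.
  rewrite <- (Rmult_1_r (2 ^ L)) at 1. apply Rmult_le_compat_l; nra.
Qed.

Lemma amp_succ_le L : amp (S L) * (2 ^ S L * 4) <= amp L.
Proof.
  rewrite (amp_eq (S L)), (amp_eq L).
  assert (1 <= INR (ncells L)) by (apply (le_INR 1), ncells_pos).
  assert (1 <= INR (patlen L)) by (apply (le_INR 1); unfold patlen; lia).
  assert (1 <= INR (patlen (S L))) by (apply (le_INR 1); unfold patlen; lia).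
  assert (1 <= INR (vscale L)) by (apply (le_INR 1); unfold vscale; pose proof (nvert_ge12 L); nia).
  pose proof (pow_lt 2 L ltac:(lra)).
  replace (INR (ncells (S L))) with (INR (ncells L) * 2 ^ L * 4 * INR (vscale L) * INR (patlen L))
    by (simpl ncells; unfold branch; rewrite !mult_INR, pow_INR;
        replace (INR 4) with 4 by (simpl; ring); change (INR 2) with 2; ring).
  simpl pow.
  set (a := INR (ncells L)) in *. set (b := 2 ^ L) in *. set (k := INR (patlen L)) in *.
  set (q := INR (vscale L)) in *. set (k' := INR (patlen (S L))) in *.
  replace (/ (a * b * 4 * q * k * (2 * b) * 4 * k') * (2 * b * 4))
    with (/ (a * b * 4 * k) * / (q * k')) by (field; repeat split; lra).
  rewrite <- (Rmult_1_r (/ (a * b * 4 * k))) at 2.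
  apply Rmult_le_compat_l; [left; apply Rinv_0_lt_compat; repeat apply Rmult_lt_0_compat; lra|].
  rewrite <- Rinv_1. apply Rinv_le_contravar; nra.
Qed.

Lemma amp_shift_le L k : amp (S L + k) <= amp (S L) * (1 / 2) ^ k.
Proof.
  induction k as [|k IH]; [rewrite Nat.add_0_r; simpl; lra|].
  rewrite Nat.add_succ_r.
  pose proof (amp_succ_le (S L + k)). pose proof (amp_pos (S (S L + k))).
  assert (1 <= 2 ^ S (S L + k)) by (apply pow_R1_Rle; lra).
  assert (amp (S (S L + k)) * 2 <= amp (S L + k)) by nra.
  simpl pow. lra.
Qed.

Definition rise (L n : nat) : R := Rmax 0 (pattern_mod L (S n) - pattern_mod L n).

Fixpoint posvar (L n : nat) : R :=
  match n with O => 0 | S n' => posvar L n' + amp L * rise L n' end.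

(* Since the pattern starts at [0], the falls up to [n] are [negvar L n]. *)
Definition negvar (L n : nat) : R := posvar L n - amp L * pattern_mod L n.

Lemma rise_bounds L n : 0 <= rise L n <= 2.
Proof.
  unfold rise, pattern_mod.
  pose proof (pattern_bound L (S n mod branch L)). pose proof (pattern_bound L (n mod branch L)).
  split; [apply Rmax_l | apply Rmax_lub; lra].
Qed.

Lemma posvar_le_mono L n k : (n <= k)%nat -> posvar L n <= posvar L k.
Proof.
  induction 1 as [|k _ IH]; [lra|]. simpl.
  pose proof (amp_pos L). pose proof (rise_bounds L k). nra.
Qed.

Lemma posvar_nonneg L n : 0 <= posvar L n.
Proof. apply (posvar_le_mono L 0); lia. Qed.

Lemma negvar_le_mono L n k : (n <= k)%nat -> negvar L n <= negvar L k.
Proof.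
  induction 1 as [|k _ IH]; [lra|]. unfold negvar in *. simpl posvar.
  pose proof (amp_pos L).
  assert (pattern_mod L (S k) - pattern_mod L k <= rise L k) by apply Rmax_r.
  nra.
Qed.

Lemma pattern_mod_add_branch L n : pattern_mod L (n + branch L) = pattern_mod L n.
Proof.
  unfold pattern_mod. replace (n + branch L)%nat with (n + 1 * branch L)%nat by lia.
  rewrite Nat.Div0.mod_add. reflexivity.
Qed.

Lemma posvar_add_branch L n : posvar L (n + branch L) = posvar L n + posvar L (branch L).
Proof.
  induction n as [|n IH]; [simpl; lra|]. simpl. rewrite IH.
  unfold rise. rewrite <- Nat.add_succ_l, !pattern_mod_add_branch. ring.
Qed.

Lemma posvar_periods L a b : posvar L (a * branch L + b) = INR a * posvar L (branch L) + posvar L b.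
Proof.
  induction a as [|a IH]; [simpl; lra|].
  replace (S a * branch L + b)%nat with ((a * branch L + b) + branch L)%nat by lia.
  rewrite posvar_add_branch, IH, S_INR. ring.
Qed.

Lemma posvar_le_linear L n : posvar L n <= 2 * amp L * INR n.
Proof.
  induction n as [|n IH]; [simpl; lra|]. simpl posvar. rewrite S_INR.
  pose proof (amp_pos L). pose proof (rise_bounds L n). nra.
Qed.

(* The pattern vanishes from slot [patlen L] to the end of the cell: no more rises. *)
Lemma posvar_branch L : posvar L (branch L) = posvar L (patlen L).
Proof.
  pose proof (patlen_lt_branch L).
  assert (Hflat : forall k, (patlen L + k <= branch L)%nat ->
                            posvar L (patlen L + k) = posvar L (patlen L)).
  { induction k as [|k IH]; intros Hk; [rewrite Nat.add_0_r; auto|].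
    rewrite Nat.add_succ_r. simpl. rewrite IH by lia.
    assert (Hk0 : pattern_mod L (patlen L + k) = 0).
    { unfold pattern_mod. rewrite Nat.mod_small by lia. apply pattern_tail; lia. }
    assert (Hk1 : pattern_mod L (S (patlen L + k)) = 0).
    { unfold pattern_mod. destruct (Nat.eq_dec (S (patlen L + k)) (branch L)) as [->|].
      - rewrite Nat.Div0.mod_same. reflexivity.
      - rewrite Nat.mod_small by lia. apply pattern_tail; lia. }
    unfold rise. rewrite Hk0, Hk1, Rminus_0_r, Rmax_left by lra. ring. }
  replace (branch L) with (patlen L + (branch L - patlen L))%nat at 1 by lia.
  apply Hflat. lia.
Qed.

Lemma posvar_le L n : posvar L n <= INR (n / branch L + 1) * (2 * amp L * INR (patlen L)).
Proof.
  pose proof (branch_pos L).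
  rewrite (Nat.div_mod_eq n (branch L)) at 1. rewrite (Nat.mul_comm (branch L)), posvar_periods.
  pose proof (Nat.mod_upper_bound n (branch L) ltac:(lia)).
  assert (posvar L (n mod branch L) <= posvar L (branch L)) by (apply posvar_le_mono; lia).
  rewrite posvar_branch in *. pose proof (posvar_le_linear L (patlen L)).
  pose proof (posvar_nonneg L (patlen L)). pose proof (pos_INR (n / branch L)).
  rewrite plus_INR. simpl. nra.
Qed.

Definition cell_index (L : nat) (t : R) : nat := nfloor (t * INR (ncells L)).

Lemma cell_index_le_mono L s t : 0 <= s -> s <= t -> (cell_index L s <= cell_index L t)%nat.
Proof. intros. pose proof (pos_INR (ncells L)). apply nfloor_le_mono; nra. Qed.

Definition wave (L : nat) (t : R) : R := amp L * pattern_mod L (cell_index (S L) t).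
Definition layer (L : nat) (t : R) : R := wave L t - amp L.
Definition gpart (L : nat) (t : R) : R := posvar L (cell_index (S L) t).
Definition hpart (L : nat) (t : R) : R := negvar L (cell_index (S L) t) + amp L.

Lemma wave_bound L t : Rabs (wave L t) <= amp L.
Proof.
  unfold wave. pose proof (amp_pos L).
  pose proof (pattern_bound L (cell_index (S L) t mod branch L)) as Hp.
  rewrite Rabs_mult, (Rabs_pos_eq (amp L)) by lra.
  rewrite <- (Rmult_1_r (amp L)) at 2. apply Rmult_le_compat_l; [lra|]. apply Rabs_le, Hp.
Qed.

Lemma layer_bound L t : Rabs (layer L t) <= 2 * amp L.
Proof.
  unfold layer. pose proof (wave_bound L t). pose proof (amp_pos L).
  eapply Rle_trans; [apply Rabs_triang|]. rewrite Rabs_Ropp, (Rabs_pos_eq (amp L)) by lra. lra.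
Qed.

Lemma gpart_bound L t : 0 <= t <= 1 -> 0 <= gpart L t <= (1 / 2) ^ L.
Proof.
  intros Ht. split; [apply posvar_nonneg|]. unfold gpart.
  pose proof (branch_pos L).
  assert (Hidx : (cell_index (S L) t / branch L <= ncells L)%nat).
  { transitivity (ncells (S L) / branch L)%nat.
    - apply Nat.Div0.div_le_mono. unfold cell_index.
      rewrite <- (nfloor_INR (ncells (S L))) at 2. pose proof (pos_INR (ncells (S L))).
      apply nfloor_le_mono; nra.
    - simpl ncells. rewrite Nat.div_mul; lia. }
  apply le_INR in Hidx.
  eapply Rle_trans; [apply posvar_le|]. rewrite plus_INR. change (INR 1) with 1.
  pose proof (amp_pos L). assert (1 <= INR (ncells L)) by (apply (le_INR 1), ncells_pos).
  assert (0 < INR (patlen L)) by (apply lt_0_INR; unfold patlen; lia).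
  assert (0 < 2 * amp L * INR (patlen L))
    by (apply Rmult_lt_0_compat; [apply Rmult_lt_0_compat|]; lra).
  apply Rle_trans with ((2 * INR (ncells L)) * (2 * amp L * INR (patlen L))).
  { apply Rmult_le_compat_r; lra. }
  rewrite amp_eq, Rdiv_1_l, pow_inv. right. pose proof (pow_lt 2 L ltac:(lra)).
  field. repeat split; lra.
Qed.

Lemma hpart_bound L t : 0 <= t <= 1 -> 0 <= hpart L t <= 3 * (1 / 2) ^ L.
Proof.
  intros Ht. pose proof (gpart_bound L t Ht). pose proof (wave_bound L t). pose proof (amp_le_pow L).
  replace (hpart L t) with (gpart L t - wave L t + amp L)
    by (unfold hpart, negvar, gpart, wave; ring).
  pose proof (Rle_abs (wave L t)). pose proof (Rabs_maj2 (wave L t)). lra.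
Qed.

Lemma gpart_mono L s t : 0 <= s -> s <= t -> gpart L s <= gpart L t.
Proof. intros. apply posvar_le_mono, cell_index_le_mono; auto. Qed.

Lemma hpart_mono L s t : 0 <= s -> s <= t -> hpart L s <= hpart L t.
Proof. intros. unfold hpart. apply Rplus_le_compat_r, negvar_le_mono, cell_index_le_mono; auto. Qed.

Lemma ex_series_geom_dominated (a : nat -> R) (C : R) :
  (forall n, Rabs (a n) <= C * (1 / 2) ^ n) -> ex_series a.
Proof.
  intros H. apply (ex_series_le a (fun n => C * (1 / 2) ^ n)); [exact H|].
  apply (ex_series_scal_l C (fun n => (1 / 2) ^ n)), ex_series_geom.
  rewrite Rabs_pos_eq; lra.
Qed.

Definition gfun (t : R) : R := Series (fun L => gpart L t).
Definition hfun (t : R) : R := - Series (fun L => hpart L t).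
Definition fsum (t : R) : R := gfun t + hfun t.

Lemma ex_series_gpart t : 0 <= t <= 1 -> ex_series (fun L => gpart L t).
Proof.
  intros Ht. apply (ex_series_geom_dominated _ 1). intros n.
  pose proof (gpart_bound n t Ht). rewrite Rabs_pos_eq; lra.
Qed.

Lemma ex_series_hpart t : 0 <= t <= 1 -> ex_series (fun L => hpart L t).
Proof.
  intros Ht. apply (ex_series_geom_dominated _ 3). intros n.
  pose proof (hpart_bound n t Ht). rewrite Rabs_pos_eq; lra.
Qed.

Lemma ex_series_layer t : ex_series (fun L => layer L t).
Proof.
  apply (ex_series_geom_dominated _ 2). intros n.
  pose proof (layer_bound n t). pose proof (amp_le_pow n). lra.
Qed.

Lemma gfun_mono a b : 0 <= a -> a <= b -> b <= 1 -> gfun a <= gfun b.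
Proof.
  intros. apply Series_le; [|apply ex_series_gpart; lra].
  intros n. split; [apply (gpart_bound n a); lra | apply gpart_mono; lra].
Qed.

Lemma hfun_antimono a b : 0 <= a -> a <= b -> b <= 1 -> hfun b <= hfun a.
Proof.
  intros. apply Ropp_le_contravar, Series_le; [|apply ex_series_hpart; lra].
  intros n. split; [apply (hpart_bound n a); lra | apply hpart_mono; lra].
Qed.

Lemma fsum_series t : 0 <= t <= 1 -> fsum t = Series (fun L => layer L t).
Proof.
  intros Ht. unfold fsum, gfun, hfun.
  rewrite <- Rminus_def, <- Series_minus by (apply ex_series_gpart || apply ex_series_hpart; auto).
  apply Series_ext. intros n. unfold gpart, hpart, layer, wave, negvar. ring.
Qed.

Lemma layer_tail_bound L t :
  Rabs (Series (fun k => layer (S L + k) t)) <= amp L * (1 / 2) ^ S L.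
Proof.
  set (bound := fun k => 2 * amp (S L) * (1 / 2) ^ k).
  assert (Hb : forall k, 0 <= Rabs (layer (S L + k) t) <= bound k).
  { intros k. split; [apply Rabs_pos|]. unfold bound.
    pose proof (layer_bound (S L + k) t). pose proof (amp_shift_le L k). lra. }
  assert (Hexb : ex_series bound).
  { apply (ex_series_scal_l (2 * amp (S L)) (fun n => (1 / 2) ^ n)), ex_series_geom.
    rewrite Rabs_pos_eq; lra. }
  assert (Hexa : ex_series (fun k => Rabs (layer (S L + k) t))).
  { apply (ex_series_geom_dominated _ (2 * amp (S L))). intros n. rewrite Rabs_Rabsolu. apply Hb. }
  eapply Rle_trans; [apply Series_Rabs; auto|].
  eapply Rle_trans; [apply (Series_le _ bound); auto|]. unfold bound.
  rewrite (Series_scal_l (2 * amp (S L)) (fun k => (1 / 2) ^ k)), Series_geom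
    by (rewrite Rabs_pos_eq; lra).
  pose proof (amp_succ_le L). rewrite Rdiv_1_l, pow_inv. pose proof (pow_lt 2 (S L) ltac:(lra)).
  replace (2 * amp (S L) * / (1 - / 2)) with (4 * amp (S L)) by field.
  apply (Rmult_le_reg_r (2 ^ S L)); auto. rewrite (Rmult_assoc (amp L)), Rinv_l by lra. lra.
Qed.

(* Cantor's nested-interval argument; the strict [b' < b] keeps the limit point
   inside every half-open cell. *)
Lemma nested_cells_escape (I : R -> R -> Prop) (A : nat -> R -> Prop) a0 b0 :
  I a0 b0 -> (forall a b, I a b -> a < b) ->
  (forall n a b, I a b -> exists a' b', I a' b' /\ a <= a' /\ b' < b /\
     forall t, a' <= t < b' -> ~ A n t) ->
  exists t, a0 <= t <= b0 /\ forall n, ~ A n t.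
Proof.
  intros HI0 HIlt Hshrink.
  destruct (choice (fun (nab : nat * (R * R)) (ab' : R * R) =>
      I (fst (snd nab)) (snd (snd nab)) ->
      I (fst ab') (snd ab') /\ fst (snd nab) <= fst ab' /\ snd ab' < snd (snd nab) /\
      forall t, fst ab' <= t < snd ab' -> ~ A (fst nab) t)) as (next & Hnext).
  { intros (n & a & b). destruct (classic (I a b)) as [Hab|Hab].
    - destruct (Hshrink n a b Hab) as (a' & b' & H). exists (a', b'). intros _. exact H.
    - exists (a, b). intros H; contradiction. }
  set (cell := fix cell (k : nat) : R * R :=
         match k with O => (a0, b0) | S k' => next (k', cell k') end).
  assert (Hcell : forall k, I (fst (cell k)) (snd (cell k))).
  { induction k; [exact HI0 | exact (proj1 (Hnext (k, cell k) IHk))]. }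
  set (lft := fun k => fst (cell k)). set (rgt := fun k => snd (cell k)).
  assert (Hstep : forall k, lft k <= lft (S k) /\ rgt (S k) < rgt k /\
            forall t, lft (S k) <= t < rgt (S k) -> ~ A k t)
    by (intros k; exact (proj2 (Hnext (k, cell k) (Hcell k)))).
  assert (Hlft : forall k d, lft k <= lft (k + d)%nat).
  { intros k d; induction d; [rewrite Nat.add_0_r; lra|].
    rewrite Nat.add_succ_r. pose proof (Hstep (k + d)%nat); lra. }
  assert (Hrgt : forall k d, rgt (k + d)%nat <= rgt k).
  { intros k d; induction d; [rewrite Nat.add_0_r; lra|].
    rewrite Nat.add_succ_r. pose proof (Hstep (k + d)%nat); lra. }
  assert (Hlr : forall n k, lft n <= rgt k).
  { intros n k. pose proof (Hlft n k) as Hl. pose proof (Hrgt k n) as Hr.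
    rewrite Nat.add_comm in Hr. pose proof (HIlt _ _ (Hcell (n + k)%nat)).
    unfold lft, rgt in *. lra. }
  destruct (completeness (fun x => exists n, x = lft n)) as (t & Hub & Hleast).
  { exists (rgt 0%nat). intros x (n & ->). apply Hlr. }
  { exists (lft 0%nat), 0%nat. reflexivity. }
  assert (Ht1 : forall n, lft n <= t) by (intros n; apply Hub; exists n; reflexivity).
  assert (Ht2 : forall k, t <= rgt k) by (intros k; apply Hleast; intros x (n & ->); apply Hlr).
  exists t. split; [split; [apply (Ht1 0%nat) | apply (Ht2 0%nat)]|].
  intros n. apply (Hstep n). pose proof (Ht1 (S n)). pose proof (Ht2 (S (S n))).
  pose proof (Hstep (S n)). lra.
Qed.

Definition in_cell (L n : nat) (t : R) : Prop := INR n <= t * INR (ncells L) < INR n + 1.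

Lemma cell_index_in_cell L n t : 0 <= t -> in_cell L n t -> cell_index L t = n.
Proof. intros Ht H. apply nfloor_unique; auto. pose proof (pos_INR (ncells L)); nra. Qed.

Fixpoint cell_ratio (L s : nat) : nat :=
  match s with O => 1 | S s' => cell_ratio L s' * branch (L + s') end.

Lemma ncells_add L s : ncells (L + s) = (ncells L * cell_ratio L s)%nat.
Proof.
  induction s as [|s IH]; [simpl; rewrite Nat.add_0_r; lia|].
  rewrite Nat.add_succ_r. simpl. rewrite IH. lia.
Qed.

Lemma cell_ratio_pos L s : (1 <= cell_ratio L s)%nat.
Proof. induction s; simpl; auto. pose proof (branch_pos (L + s)). nia. Qed.

Lemma cell_index_coarse t l L' : 0 <= t -> (l <= L')%nat ->
  cell_index l t = (cell_index L' t / cell_ratio l (L' - l))%nat.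
Proof.
  intros Ht Hl. unfold cell_index. pose proof (cell_ratio_pos l (L' - l)).
  rewrite <- nfloor_div; auto; [|pose proof (pos_INR (ncells L')); nra].
  f_equal. replace L' with (l + (L' - l))%nat at 1 by lia. rewrite ncells_add, mult_INR.
  assert (0 < INR (cell_ratio l (L' - l))) by (apply lt_0_INR; lia).
  field. lra.
Qed.

Lemma wave_same_cell l L' t t' : 0 <= t -> 0 <= t' -> (l < L')%nat ->
  cell_index L' t = cell_index L' t' -> wave l t = wave l t'.
Proof.
  intros Ht Ht' Hl E. unfold wave.
  rewrite (cell_index_coarse t (S l) L'), (cell_index_coarse t' (S l) L'), E; auto; lia.
Qed.

Lemma in_subcell_digit L N k t :
  0 <= t -> (k < branch L)%nat -> in_cell (S L) (N * branch L + k) t ->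
  cell_index (S L) t mod branch L = k /\ cell_index L t = N.
Proof.
  intros Ht Hk H. pose proof (cell_index_in_cell _ _ _ Ht H) as E. split.
  - rewrite E, Nat.add_comm, Nat.Div0.mod_add. apply Nat.mod_small; auto.
  - rewrite (cell_index_coarse t L (S L)) by (auto; lia).
    rewrite Nat.sub_succ_l, Nat.sub_diag by lia.
    change (cell_ratio L 1) with (1 * branch (L + 0))%nat. rewrite Nat.add_0_r, Nat.mul_1_l, E.
    rewrite Nat.add_comm, Nat.div_add, Nat.div_small; auto; lia.
Qed.

Lemma subcell_x_near L N j t : 0 <= t -> (j < nvert L)%nat ->
  in_cell (S L) (N * branch L + vertex_slot L j) t ->
  Rabs (t - (INR N / INR (ncells L) + amp L * (1 + cos (angle (nvert L) j))))
  <= amp L / INR (nvert L).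
Proof.
  intros Ht Hj H. unfold in_cell in H.
  set (m := nvert L) in *. set (M := branch L) in *.
  assert (Hw : INR (ncells (S L)) = INR (ncells L) * INR M)
    by (simpl ncells; rewrite mult_INR; reflexivity).
  pose proof (INR_ncells_pos L).
  assert (HM : 0 < INR M) by (apply lt_0_INR; pose proof (branch_pos L); lia).
  assert (Hm : 12 <= INR m)
    by (replace 12 with (INR 12) by (simpl; ring); apply le_INR, nvert_ge12).
  set (z := INR m * (1 + cos (angle m j))).
  assert (Hz : 0 <= z) by (unfold z; pose proof (COS_bound (angle m j)); nra).
  pose proof (nfloor_spec z Hz) as Hr.
  assert (Hslot : INR (vertex_slot L j) = (INR m + 1) * INR (nfloor z) + INR j + 1)
    by (unfold vertex_slot; rewrite !plus_INR, mult_INR, plus_INR; reflexivity).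
  assert (Hj' : INR j + 1 <= INR m) by (rewrite <- S_INR; apply le_INR; lia).
  pose proof (pos_INR j).
  rewrite plus_INR, mult_INR, Hslot, Hw in H.
  unfold amp. rewrite Hw. unfold vscale. rewrite mult_INR, plus_INR. fold m M.
  change (INR 1) with 1.
  set (w := INR (ncells L)) in *. set (r := INR (nfloor z)) in *.
  set (mm := INR m) in *. set (MM := INR M) in *.
  replace ((mm + 1) * mm / (w * MM) * (1 + cos (angle m j))) with ((mm + 1) * z / (w * MM))
    by (unfold z; field; lra).
  replace ((mm + 1) * mm / (w * MM) / mm) with ((mm + 1) / (w * MM)) by (field; lra).
  replace (t - (INR N / w + (mm + 1) * z / (w * MM)))
    with ((t * (w * MM) - INR N * MM - (mm + 1) * z) / (w * MM)) by (field; lra).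
  assert (0 < w * MM) by (apply Rmult_lt_0_compat; lra).
  unfold Rdiv. rewrite Rabs_mult, (Rabs_pos_eq (/ (w * MM))) by (left; apply Rinv_0_lt_compat; lra).
  apply Rmult_le_compat_r; [left; apply Rinv_0_lt_compat; lra|].
  apply Rabs_le. split; nra.
Qed.

(* Layers below [S Lp] are constant on the parent cell, the layer [S Lp] takes the
   vertex value, and the deeper layers add at most the tail bound. *)
Lemma subcell_y_near Lp N j t : 0 <= t <= 1 -> (j < nvert (S Lp))%nat ->
  in_cell (S (S Lp)) (N * branch (S Lp) + vertex_slot (S Lp) j) t ->
  Rabs (fsum t - (sum_f_R0 (fun l => layer l (INR N / INR (ncells (S Lp)))) Lp - amp (S Lp)
                  + amp (S Lp) * sin (angle (nvert (S Lp)) j)))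
  <= amp (S Lp) * (1 / 2) ^ S (S Lp).
Proof.
  intros Ht Hj H. set (L := S Lp) in *. set (x0 := INR N / INR (ncells L)).
  pose proof (INR_ncells_pos L).
  assert (Hx0 : 0 <= x0) by (apply Rdiv_le_0_compat; [apply pos_INR | lra]).
  pose proof (vertex_slot_lt L j Hj). pose proof (patlen_lt_branch L).
  destruct (in_subcell_digit L N (vertex_slot L j) t ltac:(lra) ltac:(lia) H) as [Hd Hcell].
  assert (Hx0n : cell_index L x0 = N).
  { unfold cell_index, x0.
    replace (INR N / INR (ncells L) * INR (ncells L)) with (INR N) by (field; lra).
    apply nfloor_INR. }
  rewrite fsum_series by auto.
  rewrite (Series_incr_n _ (S L)) by (lia || apply ex_series_layer). simpl pred.
  unfold L at 1. rewrite tech5.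
  rewrite (sum_eq (fun l => layer l t) (fun l => layer l x0)).
  2:{ intros i Hi. unfold layer. rewrite (wave_same_cell i L t x0); try lra; try lia. }
  assert (Hv : layer L t = amp L * sin (angle (nvert L) j) - amp L)
    by (unfold layer, wave, pattern_mod; rewrite Hd, pattern_slot; auto).
  fold L. rewrite Hv.
  match goal with
  | |- Rabs ?e <= _ => replace e with (Series (fun k => layer (S L + k) t)) by ring
  end.
  apply layer_tail_bound.
Qed.

Lemma subcell_point_near_vertex Lp N j t : 0 <= t <= 1 -> (j < nvert (S Lp))%nat ->
  in_cell (S (S Lp)) (N * branch (S Lp) + vertex_slot (S Lp) j) t ->
  edist (t, fsum t)
        (polygon_vertex (INR N / INR (ncells (S Lp)))
           (sum_f_R0 (fun l => layer l (INR N / INR (ncells (S Lp)))) Lp - amp (S Lp))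
           (amp (S Lp)) (nvert (S Lp)) j)
  <= amp (S Lp) / INR (nvert (S Lp)) + amp (S Lp) * (1 / 2) ^ S (S Lp).
Proof.
  intros Ht Hj H. eapply Rle_trans; [apply edist_le_abs_sum|].
  unfold polygon_vertex; cbn [fst snd].
  apply Rplus_le_compat; [apply subcell_x_near | apply subcell_y_near]; auto; lra.
Qed.

Lemma subcell_nested (a A k w : nat) : (1 <= A)%nat -> (1 <= w)%nat -> (k + 1 < A)%nat ->
  INR a / INR w <= INR (a * A + k) / INR (w * A) /\
  (INR (a * A + k) + 1) / INR (w * A) < (INR a + 1) / INR w.
Proof.
  intros HA Hw Hk.
  assert (HAr : 1 <= INR A) by (apply (le_INR 1); auto).
  assert (Hwr : 1 <= INR w) by (apply (le_INR 1); auto).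
  assert (Hkr : INR k + 1 < INR A) by (rewrite <- S_INR; apply lt_INR; lia).
  pose proof (pos_INR k). pose proof (pos_INR a).
  assert (Hinv : 0 < / (INR w * INR A)) by (apply Rinv_0_lt_compat, Rmult_lt_0_compat; lra).
  rewrite plus_INR, !mult_INR. split.
  - replace ((INR a * INR A + INR k) / (INR w * INR A))
      with (INR a / INR w + INR k * / (INR w * INR A)) by (field; lra).
    assert (0 <= INR k * / (INR w * INR A)) by (apply Rmult_le_pos; lra). lra.
  - replace ((INR a + 1) / INR w)
      with ((INR a * INR A + INR k + 1) / (INR w * INR A) + (INR A - INR k - 1) * / (INR w * INR A))
      by (field; lra).
    assert (0 < (INR A - INR k - 1) * / (INR w * INR A)) by (apply Rmult_lt_0_compat; lra). lra.
Qed.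

Lemma INR_le_pow2 n : INR n <= 2 ^ n.
Proof.
  induction n as [|n IH]; [simpl; lra|]. rewrite S_INR. simpl.
  assert (1 <= 2 ^ n) by (apply pow_R1_Rle; lra). lra.
Qed.

(* All error terms are at most [r / (L + 1)], since [nvert L = 12 (L + 1)] and [2 pi < 12]. *)
Lemma polygon_error_small (c r : R) (L : nat) : 0 <= c -> 0 < r -> 5 * c + 4 < INR (S L) ->
  c * (r * (2 * PI / INR (nvert L)) + 2 * (r / INR (nvert L) + r * (1 / 2) ^ S L)) <
  r - 2 * (r / INR (nvert L) + r * (1 / 2) ^ S L).
Proof.
  intros Hc Hr Hn. set (n1 := INR (S L)) in *.
  assert (Hn1 : 0 < n1) by (unfold n1; apply lt_0_INR; lia).
  assert (Hinv : 0 < / n1) by (apply Rinv_0_lt_compat; lra).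
  replace (INR (nvert L)) with (12 * n1)
    by (unfold nvert, n1; rewrite mult_INR, Nat.add_1_r; simpl; ring).
  pose proof PI_4. pose proof PI_RGT_0.
  set (e := r * / n1).
  assert (H1 : r * (2 * PI / (12 * n1)) <= e).
  { unfold e. replace (r * (2 * PI / (12 * n1))) with (r * / n1 * (PI / 6)) by (field; lra).
    rewrite <- (Rmult_1_r (r * / n1)) at 2. apply Rmult_le_compat_l; [nra | lra]. }
  assert (H2 : r / (12 * n1) <= e) by (unfold e, Rdiv; rewrite Rinv_mult; nra).
  assert (H3 : r * (1 / 2) ^ S L <= e).
  { apply Rmult_le_compat_l; [lra|]. rewrite Rdiv_1_l, pow_inv.
    apply Rinv_le_contravar; auto. apply INR_le_pow2. }
  assert (He : (5 * c + 4) * e < r).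
  { unfold e. replace r with (r * (n1 * / n1)) at 2 by (field; lra).
    replace ((5 * c + 4) * (r * / n1)) with (r * ((5 * c + 4) * / n1)) by ring.
    apply Rmult_lt_compat_l, Rmult_lt_compat_r; auto. }
  assert (0 <= e) by (unfold e; nra).
  assert (c * (r * (2 * PI / (12 * n1)) + 2 * (r / (12 * n1) + r * (1 / 2) ^ S L)) <= c * (5 * e))
    by (apply Rmult_le_compat_l; lra).
  lra.
Qed.

Lemma subcells_not_all_met (B : pset) c Lp N :
  0 < c -> c_monotone c B -> 5 * c + 4 < INR (S (S Lp)) ->
  ~ (forall j, (j < nvert (S Lp))%nat -> exists t, 0 <= t <= 1 /\
       in_cell (S (S Lp)) (N * branch (S Lp) + vertex_slot (S Lp) j) t /\ B (t, fsum t)).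
Proof.
  intros Hc HB Hbig Hall. set (L := S Lp) in *. set (m := nvert L).
  destruct (choice (fun j t => (j < m)%nat -> 0 <= t <= 1 /\
      in_cell (S L) (N * branch L + vertex_slot L j) t /\ B (t, fsum t))) as (pick & Hpick).
  { intros j. destruct (Compare_dec.lt_dec j m) as [Hj|Hj].
    - destruct (Hall j Hj) as (t & Ht). exists t. auto.
    - exists 0. intros; lia. }
  set (x0 := INR N / INR (ncells L)). set (r := amp L).
  apply (c_monotone_not_near_polygon B c m x0 (sum_f_R0 (fun l => layer l x0) Lp - r) r
           (r / INR m + r * (1 / 2) ^ S L) (fun j => (pick j, fsum (pick j)))).
  - lra.
  - exact HB.
  - pose proof (nvert_ge12 L). unfold m. lia.
  - pose proof (amp_pos L). unfold r. lra.
  - apply polygon_error_small; [lra | apply amp_pos | exact Hbig].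
  - intros j Hj. destruct (Hpick j Hj) as (Ht & Hin & HBt).
    split; [exact HBt | apply subcell_point_near_vertex; auto].
Qed.

Definition grid_cell (a b : R) : Prop :=
  exists L N, (N < ncells L)%nat /\ a = INR N / INR (ncells L) /\ b = (INR N + 1) / INR (ncells L).

Lemma grid_cell_lt a b : grid_cell a b -> a < b.
Proof.
  intros (L & N & _ & -> & ->). pose proof (INR_ncells_pos L).
  unfold Rdiv. apply Rmult_lt_compat_r; [apply Rinv_0_lt_compat|]; lra.
Qed.

Lemma in_cell_of_bounds L N t :
  INR N / INR (ncells L) <= t < (INR N + 1) / INR (ncells L) -> in_cell L N t.
Proof.
  intros [H1 H2]. pose proof (INR_ncells_pos L). unfold in_cell.
  split; [apply (Rmult_le_reg_r (/ INR (ncells L))) | apply (Rmult_lt_reg_r (/ INR (ncells L)))];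
    try (apply Rinv_0_lt_compat; lra); rewrite Rmult_assoc, Rinv_r, Rmult_1_r by lra; auto.
Qed.

(* The subcell is found among those at the polygon vertices of a deep enough level. *)
Lemma subcell_avoiding (B : pset) c a b :
  0 < c -> c_monotone c B -> grid_cell a b ->
  exists a' b', grid_cell a' b' /\ a <= a' /\ b' < b /\
    forall t, a' <= t < b' -> ~ (0 <= t <= 1 /\ B (t, fsum t)).
Proof.
  intros Hc HB (L & N & HN & -> & ->).
  set (s := S (nfloor (5 * c + 5))). set (Lp := (L + nfloor (5 * c + 5))%nat).
  assert (Hbig : 5 * c + 4 < INR (S (S Lp))).
  { pose proof (nfloor_spec (5 * c + 5) ltac:(lra)). pose proof (pos_INR L).
    unfold Lp. rewrite !S_INR, plus_INR. lra. }
  set (NV := (N * cell_ratio L s)%nat).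
  set (child := fun j => (NV * branch (S Lp) + vertex_slot (S Lp) j)%nat).
  destruct (classic (exists j, (j < nvert (S Lp))%nat /\ forall t, 0 <= t <= 1 ->
              in_cell (S (S Lp)) (child j) t -> ~ B (t, fsum t))) as [(j & Hj & Hfree)|Hnone].
  - set (A := (cell_ratio L s * branch (S Lp))%nat).
    assert (Hcells : ncells (S (S Lp)) = (ncells L * A)%nat).
    { unfold A. change (ncells (S (S Lp))) with (ncells (S Lp) * branch (S Lp))%nat.
      replace (S Lp) with (L + s)%nat at 1 by (unfold Lp, s; lia). rewrite ncells_add. lia. }
    assert (Hchild : child j = (N * A + vertex_slot (S Lp) j)%nat) by (unfold child, NV, A; lia).
    pose proof (vertex_slot_lt (S Lp) j Hj). pose proof (patlen_lt_branch (S Lp)).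
    pose proof (cell_ratio_pos L s). pose proof (ncells_pos L).
    assert (branch (S Lp) <= A)%nat by (unfold A; nia).
    destruct (subcell_nested N A (vertex_slot (S Lp) j) (ncells L)) as [Hlo Hhi]; try lia.
    exists (INR (child j) / INR (ncells (S (S Lp)))),
           ((INR (child j) + 1) / INR (ncells (S (S Lp)))).
    rewrite Hcells, Hchild. repeat split; auto.
    + exists (S (S Lp)), (child j). rewrite Hcells, Hchild. repeat split; auto.
      assert ((N + 1) * A <= ncells L * A)%nat by (apply Nat.mul_le_mono_r; lia). lia.
    + intros t Ht [Ht01 HBt]. apply (Hfree t Ht01); auto.
      apply in_cell_of_bounds. rewrite Hcells, Hchild. exact Ht.
  - exfalso. apply (subcells_not_all_met B c Lp NV Hc HB Hbig).
    intros j Hj. apply NNPP. intros Hno. apply Hnone. exists j. split; auto.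
    intros t Ht Hin HBt. apply Hno. exists t. auto.
Qed.

Lemma fsum_graph_not_sigma_monotone : ~ sigma_monotone (graph01 fsum).
Proof.
  intros (B & HB & _ & Hcover).
  destruct (nested_cells_escape grid_cell (fun n t => 0 <= t <= 1 /\ B n (t, fsum t)) 0 1)
    as (t & Ht & Hesc).
  - exists 0%nat, 0%nat. simpl. repeat split; [lia | field | field].
  - exact grid_cell_lt.
  - intros n a b Hab. destruct (HB n) as (c & Hc & Hcm).
    exact (subcell_avoiding (B n) c a b Hc Hcm Hab).
  - destruct (Hcover (t, fsum t)) as (n & Hn); [split; auto|]. exact (Hesc n (conj Ht Hn)).
Qed.

Theorem corollary7p7 :
  exists g h : R -> R,
    c_monotone 1 (graph01 g) /\ c_monotone 1 (graph01 h) /\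
    ~ sigma_monotone (graph01 (fun x => g x + h x)).
Proof.
  exists gfun, hfun. split; [|split].
  - apply monotone_graph01_1_monotone. left. exact gfun_mono.
  - apply monotone_graph01_1_monotone. right. exact hfun_antimono.
  - exact fsum_graph_not_sigma_monotone.
Qed.
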